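(* Let $\{f_i\}_{i\in I}$ be a Parseval frame for a Hilbert space $\mathbb H$. Then for every subset $J\subset I$ and every $f\in\mathbb H$, $$\sum_{i\in J}|\langle f,f_i\rangle|^2-\Big\|\sum_{i\in J}\langle f,f_i\rangle f_i\Big\|^2=\sum_{i\in J^c}|\langle f,f_i\rangle|^2-\Big\|\sum_{i\in J^c}\langle f,f_i\rangle f_i\Big\|^2,$$ where $J^c=I\setminus J$.
   Context: A family $\{f_i\}_{i\in I}$ in a Hilbert space $\mathbb H$ is a Parseval frame if $\sum_{i\in I}|\langle f,f_i\rangle|^2=\|f\|^2$ for all $f\in\mathbb H$. *)

From HB Require Import structures.
From mathcomp Require Import all_boot all_order all_algebra.
From mathcomp Require Import finmap.
From mathcomp Require Import boolp classical_sets reals.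
From mathcomp.real_closed Require Import complex.
Set Implicit Arguments. Unset Strict Implicit. Unset Printing Implicit Defensive.
Import Order.TTheory GRing.Theory Num.Theory Num.Def.
Local Open Scope ring_scope.
Local Open Scope classical_set_scope.

Definition is_inner_product (R : realType) (H : lmodType R[i])
    (ip : H -> H -> R[i]) : Prop :=
  [/\ forall (a : R[i]) (x y z : H), ip (a *: x + y) z = a * ip x z + ip y z,
      forall x y : H, ip y x = (ip x y)^*,
      forall x : H, 0 <= ip x x &
      forall x : H, ip x x = 0 -> x = 0].

Definition hnorm (R : realType) (H : lmodType R[i]) (ip : H -> H -> R[i])
    (x : H) : R[i] := sqrtC (ip x x).

Definition ip_complete (R : realType) (H : lmodType R[i])
    (ip : H -> H -> R[i]) : Prop :=
  forall u : nat -> H,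
    (forall e : R[i], 0 < e -> exists N : nat, forall m n : nat,
        (N <= m)%N -> (N <= n)%N -> hnorm ip (u m - u n) < e) ->
    exists l : H, forall e : R[i], 0 < e -> exists N : nat, forall n : nat,
        (N <= n)%N -> hnorm ip (u n - l) < e.

Definition is_hilbert (R : realType) (H : lmodType R[i])
    (ip : H -> H -> R[i]) : Prop :=
  is_inner_product ip /\ ip_complete ip.

(** Unconditional summation over an arbitrary index set [J : set I]:
    [has_sum nrm J g s] means that the net of finite partial sums
    \sum_(i <- F) g i, F ranging over the finite subsets of J ordered by
    inclusion, converges to [s] for the (semi)norm [nrm]. *)
Definition has_sum (R : realType) (V : zmodType) (nrm : V -> R[i])
    (I : choiceType) (J : set I) (g : I -> V) (s : V) : Prop :=
  forall e : R[i], 0 < e ->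
    exists F0 : {fset I}, (forall i, i \in F0 -> J i) /\
      forall F : {fset I}, (forall i, i \in F -> J i) -> fsubset F0 F ->
        nrm (s - \sum_(i <- F) g i) < e.

Definition parseval_frame (R : realType) (H : lmodType R[i])
    (ip : H -> H -> R[i]) (I : choiceType) (fr : I -> H) : Prop :=
  forall f : H,
    has_sum (fun z : R[i] => `|z|) setT (fun i => `|ip f (fr i)| ^+ 2)
      (hnorm ip f ^+ 2).

From HB Require Import structures.
From mathcomp Require Import all_boot all_order all_algebra.
From mathcomp Require Import finmap.
From mathcomp Require Import boolp classical_sets reals.
From mathcomp.real_closed Require Import complex.
From mathcomp Require Import ring.
Import Order.TTheory GRing.Theory Num.Theory Num.Def.
Set Implicit Arguments. Unset Strict Implicit. Unset Printing Implicit Defensive.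
Local Open Scope ring_scope.
Local Open Scope classical_set_scope.

(* For a Parseval frame the synthesis map d |-> \sum_i d_i f_i has norm at most 1, so
   for every K the partial sums of \sum_(i in K) <f, f_i> f_i form a Cauchy net and
   converge to some s_K, and continuity of the inner product gives
   \sum_(i in K) |<f, f_i>|^2 = <s_K, f>.  Polarizing Parseval's identity shows that
   f = s_J + s_J^c.  Hence both sides of the identity equal <s_J, s_J^c>, which is
   real because <s_J, f> and <s_J, s_J> are. *)

Lemma big_fset_subset_split (I : choiceType) (V : zmodType) (h : I -> V)
    (F G : {fset I}) :
  (G `<=` F)%fset ->
  \sum_(i <- F) h i = \sum_(i <- G) h i + \sum_(i <- (F `\` G)%fset) h i.
Proof.
move=> /fsubsetP GF; rewrite (big_fsetID _ (mem G)) /=.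
have -> : [fset x | x in F & x \in G]%fset = G.
  by apply/fsetP => i; rewrite !inE andb_idl //; apply: GF.
have -> // : [fset x | x in F & x \notin G]%fset = (F `\` G)%fset.
by apply/fsetP => i; rewrite !inE andbC.
Qed.

Lemma ler_sum_fsubset (I : choiceType) (D : numDomainType) (p : I -> D)
    (F G : {fset I}) :
  (forall i, 0 <= p i) -> (G `<=` F)%fset -> \sum_(i <- G) p i <= \sum_(i <- F) p i.
Proof.
by move=> p0 GF; rewrite (big_fset_subset_split p GF) lerDl sumr_ge0.
Qed.

Section ParsevalFrames.
Variables (R : realType) (I : choiceType).
Local Notation C := R[i].
Local Notation has_csum := (has_sum (fun z : C => `|z|)).

Section ComplexSums.
Implicit Types (K : set I) (g : I -> C).

Lemma has_sumD K g1 g2 s1 s2 :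
  has_csum K g1 s1 -> has_csum K g2 s2 ->
  has_csum K (fun i => g1 i + g2 i) (s1 + s2).
Proof.
move=> h1 h2 e e0; have e2 : 0 < e / 2 by rewrite divr_gt0.
have [F1 [F1K hF1]] := h1 _ e2; have [F2 [F2K hF2]] := h2 _ e2.
exists (F1 `|` F2)%fset; split => [i|F FK sub].
  by rewrite in_fsetU => /orP[/F1K|/F2K].
rewrite big_split /= opprD addrACA (splitr e).
rewrite (le_lt_trans (ler_normD _ _)) //; apply: ltrD.
  by apply: hF1 => //; apply: fsubset_trans sub; apply: fsubsetUl.
by apply: hF2 => //; apply: fsubset_trans sub; apply: fsubsetUr.
Qed.

Lemma has_sumZ K g s c : has_csum K g s -> has_csum K (fun i => c * g i) (c * s).
Proof.
move=> hs e e0; have [->|c0] := eqVneq c 0.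
  exists fset0%fset; split=> [i|F _ _]; first by rewrite inE.
  by rewrite mul0r big1 ?subr0 ?normr0 // => i _; rewrite mul0r.
have [|F0 [F0K hF0]] := hs (e / `|c|); first by rewrite divr_gt0 ?normr_gt0.
exists F0; split=> // F FK sub; rewrite -mulr_sumr -mulrBr normrM.
by rewrite -ltr_pdivlMl ?normr_gt0 // mulrC hF0.
Qed.

Lemma has_sum_conj K g s : has_csum K g s -> has_csum K (fun i => (g i)^*) s^*.
Proof.
move=> hs e /hs[F0 [F0K hF0]]; exists F0; split=> // F FK sub.
by rewrite -rmorph_sum -rmorphB norm_conjC hF0.
Qed.

Lemma has_sum_unique K g s1 s2 : has_csum K g s1 -> has_csum K g s2 -> s1 = s2.
Proof.
move=> h1 h2; apply/eqP; rewrite -subr_eq0 -normr_eq0 eq_le normr_ge0 andbT.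
apply/ler_addgt0Pr => e e0; rewrite add0r.
have e2 : 0 < e / 2 by rewrite divr_gt0.
have [F1 [F1K hF1]] := h1 _ e2; have [F2 [F2K hF2]] := h2 _ e2.
have F12K i : i \in (F1 `|` F2)%fset -> K i by rewrite in_fsetU => /orP[/F1K|/F2K].
have := hF1 _ F12K (fsubsetUl _ _); have := hF2 _ F12K (fsubsetUr _ _).
set S := \sum_(i <- _) _ => lt2 lt1.
have -> : s1 - s2 = (s1 - S) - (s2 - S) by rewrite opprB addrA subrK.
by rewrite ltW // (splitr e) (le_lt_trans (ler_normB _ _)) // ltrD.
Qed.

Lemma has_sum_real K g s :
  (forall i, g i \is Num.real) -> has_csum K g s -> s \is Num.real.
Proof.
move=> greal hs; rewrite CrealE; apply/eqP/(has_sum_unique (has_sum_conj hs)).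
suff -> : (fun i => (g i)^*) = g by [].
by apply: funext => i; apply/eqP; rewrite -CrealE.
Qed.

Lemma has_sum_setC K g s1 s2 :
  has_csum K g s1 -> has_csum (~` K) g s2 -> has_csum setT g (s1 + s2).
Proof.
move=> h1 h2 e e0; have e2 : 0 < e / 2 by rewrite divr_gt0.
have [F1 [F1K hF1]] := h1 _ e2; have [F2 [F2K hF2]] := h2 _ e2.
exists (F1 `|` F2)%fset; split=> // F _ /fsubsetP sub.
rewrite (big_fsetID _ (fun i => `[< K i >])) /= opprD addrACA (splitr e).
rewrite (le_lt_trans (ler_normD _ _)) //; apply: ltrD.
  apply: hF1 => [i|]; first by rewrite !inE => /andP[_ /asboolP].
  by apply/fsubsetP => i iF1; rewrite !inE sub ?in_fsetU ?iF1 //; apply/asboolP/F1K.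
apply: hF2 => [i|]; first by rewrite !inE => /andP[_ /asboolPn].
by apply/fsubsetP => i iF2; rewrite !inE sub ?in_fsetU ?iF2 ?orbT //; apply/asboolPn/F2K.
Qed.

Lemma has_sum_ge_partial K g s : (forall i, 0 <= g i) -> has_csum K g s ->
  forall F : {fset I}, (forall i, i \in F -> K i) -> \sum_(i <- F) g i <= s.
Proof.
move=> g0 hs F FK; have sreal := has_sum_real (fun i => ger0_real (g0 i)) hs.
apply/ler_addgt0Pr => e /hs[F0 [F0K hF0]].
have FF0K i : i \in (F `|` F0)%fset -> K i by rewrite in_fsetU => /orP[/FK|/F0K].
have Sreal : \sum_(i <- (F `|` F0)%fset) g i \is Num.real by rewrite ger0_real ?sumr_ge0.
have := hF0 _ FF0K (fsubsetUr _ _); rewrite real_ltr_norml ?rpredB // => /andP[lo _].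
apply: le_trans (ler_sum_fsubset g0 (fsubsetUl F F0)) _.
by rewrite ltrBrDl ltrBlDr in lo; apply/ltW.
Qed.

Lemma has_sum_tail K g s e : (forall i, 0 <= g i) -> has_csum K g s -> 0 < e ->
  exists T : {fset I}, forall G : {fset I}, (forall i, i \in G -> K i) ->
    (forall i, i \in G -> i \notin T) -> \sum_(i <- G) g i < e.
Proof.
move=> g0 hs /hs[T [TK hT]]; exists T => G GK GT.
have TGK i : i \in (T `|` G)%fset -> K i by rewrite in_fsetU => /orP[/TK|/GK].
have := has_sum_ge_partial g0 hs TGK.
rewrite (big_fset_subset_split g (fsubsetUl T G)) -lerBrDl.
have -> : ((T `|` G) `\` T)%fset = G.
  by apply/fsetP => i; rewrite !inE andb_orr andNb /= andb_idl //; apply: GT.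
move/le_lt_trans; apply; apply: real_ltr_normlW (hT _ TK (fsubset_refl T)).
apply: rpredB; first exact: has_sum_real (fun i => ger0_real (g0 i)) hs.
by rewrite ger0_real ?sumr_ge0.
Qed.

End ComplexSums.

Lemma fset_chain_cover (K : set I) (F : nat -> {fset I}) :
  (forall n i, i \in F n -> K i) ->
  exists G : nat -> {fset I}, [/\ forall n i, i \in G n -> K i,
    forall n, (F n `<=` G n)%fset &
    forall m n, (m <= n)%N -> (G m `<=` G n)%fset].
Proof.
move=> FK; pose G := fix G n := if n is m.+1 then (G m `|` F n)%fset else F 0%N.
exists G; split.
- elim=> [|n IH] i /=; first exact: FK.
  by rewrite in_fsetU => /orP[/IH|/FK].
- by case=> [|n] /=; [exact: fsubset_refl | exact: fsubsetUr].
- move=> m n /subnK <-; elim: (n - m)%N => [|k IH]; first exact: fsubset_refl.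
  by rewrite addSn; apply: fsubset_trans IH (fsubsetUl _ _).
Qed.

Lemma exists_invS_lt (e : C) : 0 < e -> exists N : nat, N.+1%:R^-1 < e.
Proof.
case: e => a b; rewrite ltcE /= => /andP[/eqP -> a0].
have [N hN] : exists N : nat, N.+1%:R^-1 < a.
  have ia : 0 <= a^-1 by rewrite invr_ge0 ltW.
  exists (archi_bound a^-1); rewrite -[X in _ < X]invrK ltf_pV2 ?posrE ?invr_gt0 ?ltr0Sn //.
  by rewrite (lt_le_trans (archi_boundP ia)) // ler_nat leqnSn.
by exists N; rewrite -ltcR fmorphV rmorph_nat in hN.
Qed.

Section InnerProduct.
Variables (H : lmodType C) (ip : H -> H -> C).
Hypothesis ip_inner : is_inner_product ip.

Lemma ipDZl a x y z : ip (a *: x + y) z = a * ip x z + ip y z.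
Proof. by case: ip_inner. Qed.
Lemma ipC x y : ip y x = (ip x y)^*.
Proof. by case: ip_inner. Qed.
Lemma ip_ge0 x : 0 <= ip x x.
Proof. by case: ip_inner. Qed.
Lemma ip_eq0 x : ip x x = 0 -> x = 0.
Proof. by case: ip_inner => _ _ _; apply. Qed.

Lemma ip_gt0 x : x != 0 -> 0 < ip x x.
Proof. by move=> x0; rewrite lt_def ip_ge0 andbT (contra_neq (@ip_eq0 x)). Qed.

Lemma ipDl x y z : ip (x + y) z = ip x z + ip y z.
Proof. by rewrite -{1}[x]scale1r ipDZl mul1r. Qed.
Lemma ip0l z : ip 0 z = 0.
Proof. by apply: (@addrI _ (ip 0 z)); rewrite -ipDl !addr0. Qed.
Lemma ipZl a x z : ip (a *: x) z = a * ip x z.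
Proof. by rewrite -[a *: x]addr0 ipDZl ip0l addr0. Qed.
Lemma ipBl x y z : ip (x - y) z = ip x z - ip y z.
Proof. by rewrite [x - y]addrC -scaleN1r ipDZl mulN1r addrC. Qed.
Lemma ipDr x y z : ip z (x + y) = ip z x + ip z y.
Proof. by rewrite [ip z _]ipC [ip z x]ipC [ip z y]ipC ipDl rmorphD. Qed.
Lemma ipZr a x z : ip z (a *: x) = a^* * ip z x.
Proof. by rewrite [ip z _]ipC [ip z x]ipC ipZl rmorphM. Qed.
Lemma ip0r z : ip z 0 = 0.
Proof. by rewrite ipC ip0l rmorph0. Qed.
Lemma ipBr x y z : ip z (x - y) = ip z x - ip z y.
Proof. by rewrite [ip z _]ipC [ip z x]ipC [ip z y]ipC ipBl rmorphB. Qed.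
Lemma ip_suml (J : Type) (r : seq J) (v : J -> H) z :
  ip (\sum_(j <- r) v j) z = \sum_(j <- r) ip (v j) z.
Proof.
elim: r => [|j r IH]; first by rewrite !big_nil ip0l.
by rewrite !big_cons ipDl IH.
Qed.

Lemma ipD_sym_inj x y : (forall g, ip x g + ip g x = ip y g + ip g y) -> x = y.
Proof.
move=> h; apply/eqP; rewrite -subr_eq0; apply/eqP/ip_eq0.
have : ip (x - y) (x - y) * 2 =
    ip x (x - y) + ip (x - y) x - (ip y (x - y) + ip (x - y) y).
  by rewrite !ipBl !ipBr; ring.
by rewrite h subrr => /eqP; rewrite mulf_eq0 pnatr_eq0 orbF => /eqP.
Qed.

Lemma hnorm_ge0 x : 0 <= hnorm ip x.
Proof. by rewrite sqrtC_ge0 ip_ge0. Qed.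
Lemma hnorm_sqr x : hnorm ip x ^+ 2 = ip x x.
Proof. exact: sqrtCK. Qed.
Lemma hnorm_gt0 x : x != 0 -> 0 < hnorm ip x.
Proof. by move=> x0; rewrite sqrtC_gt0 ip_gt0. Qed.
Lemma hnormBC x y : hnorm ip (x - y) = hnorm ip (y - x).
Proof. by rewrite /hnorm !ipBl !ipBr; congr sqrtC; ring. Qed.
Lemma hnorm_lt x e : 0 < e -> (hnorm ip x < e) = (ip x x < e ^+ 2).
Proof.
by move=> e0; rewrite -[in LHS](sqrCK (ltW e0)) ltr_sqrtC ?nnegrE ?ip_ge0 ?exprn_ge0 ?ltW.
Qed.

Lemma cauchy_schwarz x y : `|ip x y| <= hnorm ip x * hnorm ip y.
Proof.
have [->|y0] := eqVneq y 0; first by rewrite ip0r normr0 mulr_ge0 ?hnorm_ge0.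
have t0 := ip_gt0 y0; set z := ip x y; set t := ip y y in t0 *.
have tR : t^* = t by rewrite -ipC.
have := ip_ge0 (x - (z / t) *: y).
rewrite ipBl !ipBr !ipZl !ipZr -/z -/t [ip y x]ipC -/z.
have -> : (z / t)^* = z^* / t by rewrite rmorphM fmorphV /= tR.
have -> : ip x x - z^* / t * z - (z / t * z^* - z / t * (z^* / t * t))
    = ip x x - z * z^* / t by field; apply: lt0r_neq0.
rewrite subr_ge0 ler_pdivrMr // -normCK => zle.
rewrite -sqrtCM ?nnegrE ?ip_ge0 // -(sqrCK (normr_ge0 z)).
by rewrite -/t ler_sqrtC // nnegrE ?exprn_ge0 // mulr_ge0 ?ip_ge0 ?ltW.
Qed.

Lemma hnormD x y : hnorm ip (x + y) <= hnorm ip x + hnorm ip y.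
Proof.
rewrite -(ler_pXn2r (n := 2)) ?nnegrE ?addr_ge0 ?hnorm_ge0 //.
rewrite sqrrD !hnorm_sqr ipDl !ipDr.
have cross : ip x y + ip y x <= hnorm ip x * hnorm ip y *+ 2.
  rewrite [ip y x]ipC; apply: le_trans (real_ler_norm _) _.
    by rewrite CrealE rmorphD /= conjCK addrC.
  by rewrite (le_trans (ler_normD _ _)) // norm_conjC -mulr2n lerMn2r cauchy_schwarz.
by rewrite addrA lerD2r -addrA lerD2l.
Qed.

Lemma hnorm_sub_le x y z : hnorm ip (x - z) <= hnorm ip (x - y) + hnorm ip (y - z).
Proof. by have := hnormD (x - y) (y - z); rewrite addrA subrK. Qed.

Lemma has_sum_ip (K : set I) (v : I -> H) s g :
  has_sum (hnorm ip) K v s -> has_csum K (fun i => ip (v i) g) (ip s g).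
Proof.
move=> hs e e0; have [->|g0] := eqVneq g 0.
  exists fset0%fset; split=> [i|F _ _]; first by rewrite inE.
  by rewrite ip0r big1 ?subr0 ?normr0 // => i _; rewrite ip0r.
have [|F0 [F0K hF0]] := hs (e / hnorm ip g); first by rewrite divr_gt0 ?hnorm_gt0.
exists F0; split=> // F FK sub; rewrite -ip_suml -ipBl.
by rewrite (le_lt_trans (cauchy_schwarz _ _)) // -ltr_pdivlMr ?hnorm_gt0 ?hF0.
Qed.

Lemma complete_cauchy_net (K : set I) (u : {fset I} -> H) : ip_complete ip ->
  (forall e : C, 0 < e -> exists F0 : {fset I}, (forall i, i \in F0 -> K i) /\
    forall F : {fset I}, (forall i, i \in F -> K i) -> (F0 `<=` F)%fset ->
      hnorm ip (u F - u F0) < e) ->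
  exists l : H, forall e : C, 0 < e -> exists F0 : {fset I},
    (forall i, i \in F0 -> K i) /\
    forall F : {fset I}, (forall i, i \in F -> K i) -> (F0 `<=` F)%fset ->
      hnorm ip (l - u F) < e.
Proof.
(* Completeness is only stated for sequences, so follow the increasing sequence G n. *)
move=> ip_compl hu; pose eps n : C := n.+1%:R^-1.
have eps_gt0 n : 0 < eps n by rewrite invr_gt0 ltr0Sn.
have eps_le m n : (m <= n)%N -> eps n <= eps m.
  by move=> mn; rewrite lef_pV2 ?posrE ?ltr0Sn // ler_nat ltnS.
have [F hF] := choice (fun n => hu _ (eps_gt0 n)).
have [G [GK FG Gmono]] := fset_chain_cover (fun n => (hF n).1).
have near_G n (E : {fset I}) : (forall i, i \in E -> K i) -> (G n `<=` E)%fset ->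
    hnorm ip (u E - u (G n)) < eps n + eps n.
  move=> EK GE; rewrite (le_lt_trans (hnorm_sub_le _ (u (F n)) _)) //.
  rewrite [hnorm ip (u (F n) - _)]hnormBC ltrD // (hF n).2 //.
  - exact: fsubset_trans (FG n) GE.
  - exact: GK.
have [l hl] : exists l, forall e : C, 0 < e -> exists N : nat, forall n : nat,
    (N <= n)%N -> hnorm ip (u (G n) - l) < e.
  apply: ip_compl => e e0; have [N hN] := exists_invS_lt (divr_gt0 e0 (ltr0Sn _ 1)).
  suff near_N : forall m n, (N <= n <= m)%N -> hnorm ip (u (G m) - u (G n)) < e.
    exists N => m n Nm Nn; case: (leqP n m) => [nm|/ltnW mn].
      by apply: near_N; rewrite Nn.
    by rewrite hnormBC; apply: near_N; rewrite Nm.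
  move=> m n /andP[Nn nm]; rewrite (lt_le_trans (near_G n _ (GK m) (Gmono _ _ nm))) //.
  by rewrite [e]splitr lerD // ltW // (le_lt_trans (eps_le _ _ Nn)).
exists l => e e0; have e2 : 0 < e / 2 by rewrite divr_gt0.
have [N1 hN1] := hl _ e2; have [N2 hN2] := exists_invS_lt (divr_gt0 e2 (ltr0Sn _ 1)).
set n := maxn N1 N2; exists (G n); split=> [|E EK GE]; first exact: GK.
rewrite (le_lt_trans (hnorm_sub_le _ (u (G n)) _)) // hnormBC (splitr e) ltrD //.
  by apply: hN1; apply: leq_maxl.
rewrite hnormBC (lt_le_trans (near_G n E EK GE)) // [e / 2]splitr.
by rewrite lerD // ltW // (le_lt_trans (eps_le _ _ (leq_maxr N1 N2))).
Qed.

Section ParsevalFrame.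
Variable fr : I -> H.
Hypothesis parseval : parseval_frame ip fr.

Lemma parseval_sum x : has_csum setT (fun i => `|ip x (fr i)| ^+ 2) (ip x x).
Proof. by rewrite -hnorm_sqr; apply: parseval. Qed.

Lemma bessel x (F : {fset I}) : \sum_(i <- F) `|ip x (fr i)| ^+ 2 <= ip x x.
Proof.
exact: has_sum_ge_partial (fun i => exprn_ge0 2 (normr_ge0 _)) (parseval_sum x) F
  (fun _ _ => Logic.I).
Qed.

Lemma synthesis_le (F : {fset I}) (d : I -> C) :
  ip (\sum_(i <- F) d i *: fr i) (\sum_(i <- F) d i *: fr i) <= \sum_(i <- F) `|d i| ^+ 2.
Proof.
set x := \sum_(i <- F) d i *: fr i; have xx : \sum_(i <- F) d i * (ip x (fr i))^* = ip x x.
  by rewrite {3}/x ip_suml; apply: eq_bigr => i _; rewrite ipZl -ipC.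
have dist i : `|d i - ip x (fr i)| ^+ 2 = `|d i| ^+ 2 + `|ip x (fr i)| ^+ 2
    - (d i * (ip x (fr i))^* + (d i * (ip x (fr i))^*)^*).
  by rewrite !normCK rmorphB rmorphM /= conjCK; ring.
have : 0 <= \sum_(i <- F) `|d i - ip x (fr i)| ^+ 2.
  by apply: sumr_ge0 => i _; apply: exprn_ge0.
rewrite (eq_bigr _ (fun i _ => dist i)) sumrB !big_split /= -rmorph_sum /= xx -ipC.
move=> h0; rewrite -subr_ge0.
set A := \sum_(i <- F) `|d i| ^+ 2 in h0 *.
set B := \sum_(i <- F) `|ip x (fr i)| ^+ 2 in h0 *.
have -> : A - ip x x = (A + B - (ip x x + ip x x)) + (ip x x - B) by ring.
by rewrite addr_ge0 // subr_ge0 /B bessel.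
Qed.

Lemma frame_expansion_exists (K : set I) (f : H) : ip_complete ip ->
  exists s, has_sum (hnorm ip) K (fun i => ip f (fr i) *: fr i) s.
Proof.
move=> compl; apply: complete_cauchy_net compl _ => e e0.
have [T tail] := has_sum_tail (fun i => exprn_ge0 2 (normr_ge0 _)) (parseval_sum f)
  (exprn_gt0 2 e0).
exists [fset i in T | `[< K i >]]%fset; split=> [i|F FK sub].
  by rewrite !inE => /andP[_ /asboolP].
rewrite (big_fset_subset_split _ sub) addrAC subrr add0r hnorm_lt //.
apply: le_lt_trans (synthesis_le _ _) (tail _ _ _) => i; rewrite in_fsetD.
  by case/andP=> _ /FK.
case/andP=> iT0 iF; apply: contra iT0 => iT; rewrite !inE iT /=.
by apply/asboolP/FK.
Qed.

Lemma parseval_polarization x y :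
  has_csum setT (fun i => ip x (fr i) * ip (fr i) y + (ip x (fr i) * ip (fr i) y)^*)
    (ip x y + ip y x).
Proof.
have := has_sumZ 2^-1 (has_sumD (parseval_sum (x + y))
  (has_sumZ (-1) (parseval_sum (x - y)))).
have two : (2 : C) != 0 by rewrite pnatr_eq0.
congr has_sum.
  apply: funext => i; rewrite !normCK ipDl ipBl [ip (fr i) y]ipC.
  by rewrite !rmorphD ?rmorphN rmorphM /= conjCK; field.
by rewrite ipDl ipBl !ipBr !ipDr; field.
Qed.

Lemma frame_reconstruction (J : set I) f sJ sJc :
  has_sum (hnorm ip) J (fun i => ip f (fr i) *: fr i) sJ ->
  has_sum (hnorm ip) (~` J) (fun i => ip f (fr i) *: fr i) sJc ->
  f = sJ + sJc.
Proof.
move=> hJ hJc; apply: ipD_sym_inj => g.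
have hs := has_sum_setC (has_sum_ip g hJ) (has_sum_ip g hJc).
rewrite -ipDl in hs.
apply: has_sum_unique (parseval_polarization f g) _.
rewrite [ip g _]ipC.
have -> : (fun i => ip f (fr i) * ip (fr i) g + (ip f (fr i) * ip (fr i) g)^*) =
    (fun i => ip (ip f (fr i) *: fr i) g + (ip (ip f (fr i) *: fr i) g)^*).
  by apply: funext => i; rewrite ipZl.
exact: has_sumD hs (has_sum_conj hs).
Qed.

Lemma has_sum_coef_sqr (K : set I) f s :
  has_sum (hnorm ip) K (fun i => ip f (fr i) *: fr i) s ->
  has_csum K (fun i => `|ip f (fr i)| ^+ 2) (ip s f).
Proof.
move=> /(has_sum_ip f); congr has_sum; apply: funext => i.
by rewrite ipZl normCK -ipC.
Qed.

End ParsevalFrame.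
End InnerProduct.
End ParsevalFrames.

Theorem theorem3p2 (R : realType) (H : lmodType R[i]) (ip : H -> H -> R[i])
    (I : choiceType) (fr : I -> H) :
  is_hilbert ip -> parseval_frame ip fr ->
  forall (J : set I) (f : H),
  exists (aJ aJc : R[i]) (sJ sJc : H),
    [/\ has_sum (fun z : R[i] => `|z|) J (fun i => `|ip f (fr i)| ^+ 2) aJ,
        has_sum (fun z : R[i] => `|z|) (~` J) (fun i => `|ip f (fr i)| ^+ 2) aJc,
        has_sum (hnorm ip) J (fun i => ip f (fr i) *: fr i) sJ,
        has_sum (hnorm ip) (~` J) (fun i => ip f (fr i) *: fr i) sJc &
        aJ - hnorm ip sJ ^+ 2 = aJc - hnorm ip sJc ^+ 2].
Proof.
move=> [ip_inner ip_compl] parseval J f.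
have [sJ hJ] := frame_expansion_exists ip_inner parseval J f ip_compl.
have [sJc hJc] := frame_expansion_exists ip_inner parseval (~` J) f ip_compl.
have aJ := has_sum_coef_sqr ip_inner hJ; have aJc := has_sum_coef_sqr ip_inner hJc.
exists (ip sJ f), (ip sJc f), sJ, sJc; split=> //.
have f_eq := frame_reconstruction ip_inner parseval hJ hJc.
have cross_real : ip sJ sJc \is Num.real.
  have -> : ip sJ sJc = ip sJ f - ip sJ sJ by rewrite f_eq (ipDr ip_inner) addrAC subrr add0r.
  apply: rpredB; last by rewrite ger0_real ?(ip_ge0 ip_inner).
  exact: has_sum_real (fun i => ger0_real (exprn_ge0 2 (normr_ge0 _))) aJ.
rewrite !hnorm_sqr f_eq !(ipDr ip_inner) [ip sJ sJ + _]addrC !addrK.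
by rewrite [ip sJc sJ](ipC ip_inner); apply/esym/eqP; rewrite -CrealE.
Qed.
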